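(* Let $|h|^2$ be a nonnegative random variable with continuous, strictly increasing (on its support) cumulative distribution function $F$ and inverse $F^{-1}$. Fix $A>1$ and $\mathrm{SNR}>0$, and let $\lambda>0$ with $\lambda A\,\mathrm{SNR}<1$ be the Lagrange multiplier determined by $$\mathrm{SNR}=\mathbf{E}\left[\min\left\{\left[\frac{1}{\lambda}-\frac{1}{|h|^2}\right]^+,\ A\,\mathrm{SNR}\right\}\right].$$ Then (1) $$\frac{F^{-1}(1-\frac{1}{A})}{1+A\,\mathrm{SNR}\,F^{-1}(1-\frac{1}{A})}\le \lambda\le F^{-1}\left(1-\frac{1}{A}\right);$$ (2) as $\mathrm{SNR}\to 0$, $\lambda\to F^{-1}(1-\frac1A)$; (3) for every constant $n>0$, $\lambda^n\,\mathrm{SNR}\to 0$ as $\mathrm{SNR}\to0$.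
   Context: $[u]^+=\max\{0,u\}$. The quantity $\min\{[1/\lambda-1/|h|^2]^+, A\,\mathrm{SNR}\}$ is the optimal power allocation for a flat-fading channel $y=hx+v$, $v\sim\mathcal{CN}(0,1)$, with perfect channel state information at transmitter and receiver, under average power constraint $\mathbf{E}[P(h)]\le\mathrm{SNR}$ and peak power constraint $\max_h P(h)\le A\,\mathrm{SNR}$; $A$ is the peak-to-average power ratio (PAPR). *)

From Stdlib Require Import Reals Lra.
Open Scope R_scope.

Definition pos_part (u : R) : R := Rmax 0 u.

(* Optimal power allocation  min{[1/lam - 1/|h|^2]^+, A*SNR}  at gain x = |h|^2. *)
Definition power_alloc (lam A SNR x : R) : R :=
  Rmin (pos_part (/ lam - / x)) (A * SNR).

(* F is the CDF of a nonnegative random variable, continuous, and strictly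
   increasing on its support (the region where 0 < F < 1). *)
Definition nonneg_cdf (F : R -> R) : Prop :=
  (forall x y, x <= y -> F x <= F y) /\
  (forall x, x < 0 -> F x = 0) /\
  (forall eps, 0 < eps -> exists M, forall x, M <= x -> 1 - eps < F x) /\
  continuity F /\
  (forall x y, x < y -> 0 < F y -> F x < 1 -> F x < F y).

Definition is_cdf_inverse (F Finv : R -> R) : Prop :=
  forall u, 0 < u < 1 -> F (Finv u) = u.

(* E[g(|h|^2)] = v, computed through the quantile representation
   |h|^2 =d Finv(U), U uniform on [0,1]:  E[g(|h|^2)] = int_0^1 g(Finv u) du. *)
Definition expectation_is (Finv g : R -> R) (v : R) : Prop :=
  exists pr : Riemann_integrable (fun u => g (Finv u)) 0 1, RiemannInt pr = v.

Definition is_multiplier (Finv : R -> R) (A SNR lam : R) : Prop :=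
  0 < lam /\ lam * A * SNR < 1 /\
  expectation_is Finv (power_alloc lam A SNR) SNR.

Definition lim_0_right (f : R -> R) (l : R) : Prop :=
  forall eps, 0 < eps -> exists delta, 0 < delta /\
    forall s, 0 < s < delta -> Rabs (f s - l) < eps.

(** Write expectations through the quantile function, E[g(|h|^2)] = int_0^1 g(Finv u) du,
    and let c = Finv (1 - 1/A).  The allocation vanishes at gains x <= lam and saturates
    at A SNR once 1/lam - 1/x >= A SNR.  If lam > c, it vanishes on a set of probability
    larger than 1 - 1/A, so its mean falls below A SNR (1/A) = SNR; if 1/lam - 1/c > A SNR,
    it saturates on a set of probability larger than 1/A, so its mean exceeds SNR.
    Hence lam <= c and 1/lam - 1/c <= A SNR, which is (1).  Both bounds are within
    O(SNR) of c, which gives (2) and (3). *)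

From Stdlib Require Import Reals Lra.
Open Scope R_scope.

Lemma RiemannInt_ge_tail (f : R -> R) (a b c m : R) (pr : Riemann_integrable f a b) :
  a <= c <= b -> (forall x, a < x < c -> 0 <= f x) ->
  (forall x, c < x < b -> m <= f x) -> m * (b - c) <= RiemannInt pr.
Proof.
  intros Hc Hhead Htail.
  pose proof (RiemannInt_P22 pr Hc) as pr_head.
  pose proof (RiemannInt_P23 pr Hc) as pr_tail.
  rewrite <- (RiemannInt_P26 pr_head pr_tail pr).
  assert (RiemannInt (RiemannInt_P14 a c 0) <= RiemannInt pr_head)
    by (apply RiemannInt_P19; [lra | intros x Hx; apply Hhead; lra]).
  assert (RiemannInt (RiemannInt_P14 c b m) <= RiemannInt pr_tail)
    by (apply RiemannInt_P19; [lra | intros x Hx; apply Htail; lra]).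
  rewrite !RiemannInt_P15 in *. lra.
Qed.

Lemma RiemannInt_le_tail (f : R -> R) (a b c m : R) (pr : Riemann_integrable f a b) :
  a <= c <= b -> (forall x, a < x < c -> f x <= 0) ->
  (forall x, c < x < b -> f x <= m) -> RiemannInt pr <= m * (b - c).
Proof.
  intros Hc Hhead Htail.
  pose proof (RiemannInt_P22 pr Hc) as pr_head.
  pose proof (RiemannInt_P23 pr Hc) as pr_tail.
  rewrite <- (RiemannInt_P26 pr_head pr_tail pr).
  assert (RiemannInt pr_head <= RiemannInt (RiemannInt_P14 a c 0))
    by (apply RiemannInt_P19; [lra | intros x Hx; apply Hhead; lra]).
  assert (RiemannInt pr_tail <= RiemannInt (RiemannInt_P14 c b m))
    by (apply RiemannInt_P19; [lra | intros x Hx; apply Htail; lra]).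
  rewrite !RiemannInt_P15 in *. lra.
Qed.

Lemma lim_0_right_of_linear_bound (f : R -> R) (l K s0 : R) :
  0 < s0 -> 0 <= K -> (forall s, 0 < s < s0 -> Rabs (f s - l) <= K * s) ->
  lim_0_right f l.
Proof.
  intros Hs0 HK Hbound eps Heps.
  exists (Rmin s0 (eps / (K + 1))); split.
  - apply Rmin_glb_lt; [lra | apply Rdiv_lt_0_compat; lra].
  - intros s Hs.
    pose proof (Rmin_l s0 (eps / (K + 1))); pose proof (Rmin_r s0 (eps / (K + 1))).
    assert (Hs_eps : s * (K + 1) < eps).
    { replace eps with (eps / (K + 1) * (K + 1)) by (field; lra).
      apply Rmult_lt_compat_r; lra. }
    pose proof (Hbound s ltac:(lra)). nra.
Qed.

Lemma power_alloc_ge0 (lam A SNR x : R) :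
  0 <= A * SNR -> 0 <= power_alloc lam A SNR x.
Proof.
  intros HP; unfold power_alloc, pos_part.
  pose proof (Rmax_l 0 (/ lam - / x)); apply Rmin_glb; lra.
Qed.

Lemma power_alloc_le_peak (lam A SNR x : R) : power_alloc lam A SNR x <= A * SNR.
Proof. apply Rmin_r. Qed.

Lemma power_alloc_off (lam A SNR x : R) :
  0 <= A * SNR -> 0 < x <= lam -> power_alloc lam A SNR x = 0.
Proof.
  intros HP Hx; unfold power_alloc, pos_part.
  assert (/ lam <= / x) by (apply Rinv_le_contravar; lra).
  rewrite Rmax_left by lra. rewrite Rmin_left; lra.
Qed.

Lemma power_alloc_saturated (lam A SNR x x0 : R) :
  0 <= A * SNR -> 0 < x0 <= x -> A * SNR <= / lam - / x0 ->
  power_alloc lam A SNR x = A * SNR.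
Proof.
  intros HP Hx Hsat; unfold power_alloc, pos_part.
  assert (/ x <= / x0) by (apply Rinv_le_contravar; lra).
  rewrite Rmax_right by lra. rewrite Rmin_right; lra.
Qed.

Lemma Rinv_between_0_1 (A : R) : 1 < A -> 0 < / A < 1.
Proof.
  intros HA; split; [apply Rinv_0_lt_compat; lra |].
  rewrite <- Rinv_1; apply Rinv_lt_contravar; lra.
Qed.

Section Quantiles.

Variables F Finv : R -> R.
Hypothesis HF : nonneg_cdf F.
Hypothesis HFinv : is_cdf_inverse F Finv.

Lemma cdf_at_0 : F 0 = 0.
Proof.
  destruct HF as [Fmono [Fneg [_ [Fcont _]]]].
  apply Rle_antisym.
  2: { pose proof (Fmono (-1) 0 ltac:(lra)) as Hle; rewrite Fneg in Hle by lra; exact Hle. }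
  apply Rnot_lt_le; intros Hpos.
  destruct (Fcont 0 (F 0) Hpos) as [d [Hd Hnear]].
  assert (Hx : D_x no_cond 0 (- d / 2) /\ R_dist (- d / 2) 0 < d).
  { unfold D_x, no_cond, R_dist; rewrite Rabs_left; lra. }
  specialize (Hnear _ Hx); simpl in Hnear; unfold R_dist in Hnear.
  rewrite Fneg, Rminus_0_l, Rabs_Ropp, Rabs_right in Hnear; lra.
Qed.

Lemma lt_quantile (x u : R) : 0 < u < 1 -> F x < u -> x < Finv u.
Proof.
  intros Hu Hx; apply Rnot_le_lt; intros Hle.
  pose proof (proj1 HF _ _ Hle); rewrite HFinv in *; lra.
Qed.

Lemma quantile_lt (x u : R) : 0 < u < 1 -> u < F x -> Finv u < x.
Proof.
  intros Hu Hx; apply Rnot_le_lt; intros Hle.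
  pose proof (proj1 HF _ _ Hle); rewrite HFinv in *; lra.
Qed.

Lemma quantile_pos (u : R) : 0 < u < 1 -> 0 < Finv u.
Proof. intros Hu; apply lt_quantile; rewrite ?cdf_at_0; lra. Qed.

Lemma cdf_lt_quantile (x u : R) : 0 < u < 1 -> x < Finv u -> F x < u.
Proof.
  intros Hu Hx; rewrite <- (HFinv u Hu).
  destruct HF as [Fmono [_ [_ [_ Fstrict]]]].
  apply Fstrict; [exact Hx | rewrite HFinv; lra |].
  pose proof (Fmono _ _ (Rlt_le _ _ Hx)); rewrite HFinv in *; lra.
Qed.

Lemma quantile_lt_cdf (x u : R) : 0 < u < 1 -> Finv u < x -> u < F x.
Proof.
  intros Hu Hx; rewrite <- (HFinv u Hu) at 1.
  destruct HF as [Fmono [_ [_ [_ Fstrict]]]].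
  apply Fstrict; [exact Hx | | rewrite HFinv; lra].
  pose proof (Fmono _ _ (Rlt_le _ _ Hx)); rewrite HFinv in *; lra.
Qed.

Section Multiplier.

Variables A SNR lam : R.
Hypothesis HA : 1 < A.
Hypothesis HSNR : 0 < SNR.
Hypothesis Hlam : is_multiplier Finv A SNR lam.

Local Notation c := (Finv (1 - / A)).

Lemma multiplier_le_quantile : lam <= c.
Proof.
  destruct Hlam as [Hlam_pos [_ [pr Hpr]]].
  pose proof (Rinv_between_0_1 A HA) as HiA.
  assert (HP : 0 < A * SNR) by (apply Rmult_lt_0_compat; lra).
  apply Rnot_lt_le; intros Hc.
  (* [nonneg_cdf] does not bound F by 1, hence the [Rmin]. *)
  assert (Hu1 : 1 - / A < Rmin (F lam) 1)
    by (apply Rmin_glb_lt; [apply quantile_lt_cdf; lra | lra]).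
  pose proof (Rmin_l (F lam) 1); pose proof (Rmin_r (F lam) 1).
  set (u1 := Rmin (F lam) 1) in *.
  assert (Hint : RiemannInt pr <= A * SNR * (1 - u1)).
  { apply RiemannInt_le_tail; [lra | |].
    - intros u Hu; right; apply power_alloc_off; [lra |].
      split; [apply quantile_pos; lra |].
      apply Rlt_le, quantile_lt; lra.
    - intros u _; apply power_alloc_le_peak. }
  assert (A * SNR * (1 - u1) < A * SNR * / A) by (apply Rmult_lt_compat_l; lra).
  assert (A * SNR * / A = SNR) by (field; lra). lra.
Qed.

(* Beyond the gain x0 with 1/x0 = 1/lam - A SNR the allocation is saturated. *)
Lemma multiplier_inv_gap : / lam - / c <= A * SNR.
Proof.
  destruct Hlam as [Hlam_pos [_ [pr Hpr]]].
  pose proof (Rinv_between_0_1 A HA) as HiA.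
  assert (HP : 0 < A * SNR) by (apply Rmult_lt_0_compat; lra).
  assert (Hc : 0 < c) by (apply quantile_pos; lra).
  assert (Hinvc : 0 < / c) by (apply Rinv_0_lt_compat; lra).
  apply Rnot_lt_le; intros Hgap.
  set (x0 := / (/ lam - A * SNR)).
  assert (Hx0 : 0 < x0) by (apply Rinv_0_lt_compat; lra).
  assert (Hinv_x0 : / x0 = / lam - A * SNR) by (unfold x0; rewrite Rinv_inv; lra).
  assert (Hx0c : x0 < c).
  { rewrite <- (Rinv_inv x0), <- (Rinv_inv c).
    apply Rinv_lt_contravar; [apply Rmult_lt_0_compat; lra | lra]. }
  assert (Hu0 : 0 <= F x0 < 1 - / A).
  { split; [rewrite <- cdf_at_0; apply (proj1 HF); lra |].
    apply cdf_lt_quantile; lra. }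
  assert (Hint : A * SNR * (1 - F x0) <= RiemannInt pr).
  { apply RiemannInt_ge_tail; [lra | |].
    - intros u _; apply power_alloc_ge0; lra.
    - intros u Hu; right; symmetry.
      apply (power_alloc_saturated _ _ _ _ x0); [lra | | lra].
      split; [lra |]; apply Rlt_le, lt_quantile; lra. }
  assert (A * SNR * / A < A * SNR * (1 - F x0)) by (apply Rmult_lt_compat_l; lra).
  assert (A * SNR * / A = SNR) by (field; lra). lra.
Qed.

Lemma quantile_div_le_multiplier : c / (1 + A * SNR * c) <= lam.
Proof.
  destruct Hlam as [Hlam_pos _].
  assert (Hc : 0 < c) by (apply quantile_pos; pose proof (Rinv_between_0_1 A HA); lra).
  assert (HPc : 0 < A * SNR * c) by (repeat apply Rmult_lt_0_compat; lra).
  assert (Hgap : c - lam <= A * SNR * lam * c).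
  { pose proof multiplier_inv_gap as Hg.
    apply (Rmult_le_compat_l (lam * c)) in Hg; [| nra].
    replace (lam * c * (/ lam - / c)) with (c - lam) in Hg by (field; lra). lra. }
  apply (Rmult_le_reg_r (1 + A * SNR * c)); [lra |].
  unfold Rdiv; rewrite Rmult_assoc, Rinv_l by lra. lra.
Qed.

End Multiplier.

Lemma multiplier_bounds (A : R) : 1 < A ->
  forall SNR lam, 0 < SNR -> is_multiplier Finv A SNR lam ->
  Finv (1 - / A) / (1 + A * SNR * Finv (1 - / A)) <= lam /\ lam <= Finv (1 - / A).
Proof.
  intros HA SNR lam HSNR Hlam.
  exact (conj (quantile_div_le_multiplier A SNR lam HA HSNR Hlam)
              (multiplier_le_quantile A SNR lam HA HSNR Hlam)).
Qed.

End Quantiles.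

Lemma sub_mul_sq_le_div_1_plus (c P : R) : 0 <= c -> 0 <= P ->
  c - P * c * c <= c / (1 + P * c).
Proof.
  intros Hc HP.
  assert (Hpos : 0 < 1 + P * c) by nra.
  apply (Rmult_le_reg_r (1 + P * c)); [lra |].
  replace (c / (1 + P * c) * (1 + P * c)) with c by (field; lra).
  assert (0 <= P * P * c * c * c) by (repeat apply Rmult_le_pos; lra). nra.
Qed.

Theorem lemma2 (F Finv : R -> R) (A : R)
  (HF : nonneg_cdf F) (HFinv : is_cdf_inverse F Finv) (HA : 1 < A) :
  (* (1) bounds, for every SNR > 0 and its multiplier lam *)
  (forall SNR lam, 0 < SNR -> is_multiplier Finv A SNR lam ->
     Finv (1 - / A) / (1 + A * SNR * Finv (1 - / A)) <= lam /\
     lam <= Finv (1 - / A)) /\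
  (* (2),(3) asymptotics as SNR -> 0, lam = lamf SNR *)
  (forall (lamf : R -> R) (s0 : R), 0 < s0 ->
     (forall SNR, 0 < SNR < s0 -> is_multiplier Finv A SNR (lamf SNR)) ->
     lim_0_right lamf (Finv (1 - / A)) /\
     (forall n : R, 0 < n ->
        lim_0_right (fun SNR => Rpower (lamf SNR) n * SNR) 0)).
Proof.
  pose proof (multiplier_bounds F Finv HF HFinv A HA) as Hbounds.
  split; [exact Hbounds |].
  intros lamf s0 Hs0 Hmult.
  set (c := Finv (1 - / A)) in *.
  assert (Hc : 0 < c).
  { apply (quantile_pos F Finv HF HFinv); pose proof (Rinv_between_0_1 A HA); lra. }
  split.
  - apply (lim_0_right_of_linear_bound _ _ (A * c * c) s0 Hs0); [nra |].
    intros s Hs; destruct (Hbounds s (lamf s)) as [Hlow Hup]; [lra | apply Hmult; lra |].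
    pose proof (sub_mul_sq_le_div_1_plus c (A * s) (Rlt_le _ _ Hc) ltac:(nra)).
    rewrite Rabs_left1; nra.
  - intros n Hn.
    apply (lim_0_right_of_linear_bound _ _ (Rpower c n) s0 Hs0);
      [apply Rlt_le, exp_pos |].
    intros s Hs; destruct (Hbounds s (lamf s)) as [_ Hup]; [lra | apply Hmult; lra |].
    assert (Hlam_pos : 0 < lamf s) by (apply (Hmult s); lra).
    assert (0 < Rpower (lamf s) n) by apply exp_pos.
    assert (Rpower (lamf s) n <= Rpower c n) by (apply Rle_Rpower_l; lra).
    rewrite Rminus_0_r, Rabs_right by nra. nra.
Qed.
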